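(* Let $n\in\mathbb{N}$ and let $\varphi$ be a formula of $\mathbf{CPN}_n$ (built only from propositional letters, the constants $\perp_c$, $\perp_{(n)}$, $\top_{(n)}$, the negations $\neg_c$ and $\to_{(n)}$). Regard $\varphi$ as a formula of $\mathbf{CPN}_{n+1}$ by reading every chain over $[n]$ as a chain over $[n+1]$ (so $\perp_{(n)}$ becomes $\perp_{\{1,\dots,n\}}$ and $\neg_{(n)}$ becomes the weak negation $\neg_{\{1,\dots,n\}}$ of $\mathbf{CPN}_{n+1}$), replacing $\to_{(n)}$ by $\to_{(n+1)}$ and $\top_{(n)}$ by $\top_{(n+1)}$. If $\vdash_{(n+1)}\varphi$, then $\vdash_{(n)}\varphi$.
   Context: For each $m\ge 1$, write $[m]=\{1,\dots,m\}$. Chains: a chain over $[m]$ is a finite sequence of distinct elements of $[m]$; chains with the same length and the same symbols are identified, so a chain is effectively a subset of $[m]$; $\epsilon$ is the empty chain and $(m)$ the chain of all symbols of $[m]$. For chains $c,d$: the coconcatenation $c\otimes d$ is the chain of symbols occurring in exactly one of $c,d$; $d$ is a subchain of $c$ if every symbol of $d$ is a symbol of $c$. Language of $\mathbf{CPN}_m$: a countable set of propositional letters (the same for all $m$); constants $\perp_c$ for each chain $c$ over $[m]$ with $1\le|c|\le m-1$, and constants $\perp_{(m)}$ and $\top_{(m)}$; a unary connective $\neg_c$ for each nonempty chain $c$ over $[m]$; a binary connective $\to_{(m)}$. Formulas are built as usual. Conventions: $\neg_\epsilon\varphi:=\varphi$, $\perp_\epsilon:=\top_{(m)}$, and $\perp_c$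 for $c=(m)$ means $\perp_{(m)}$. Abbreviations: $\varphi\wedge_{(m)}\psi:=\neg_{(m)}(\varphi\to_{(m)}\neg_{(m)}\psi)$, $\varphi\leftrightarrow_{(m)}\psi:=(\varphi\to_{(m)}\psi)\wedge_{(m)}(\psi\to_{(m)}\varphi)$. Axioms of $\mathbf{CPN}_m$, for all formulas $\varphi,\psi,\chi$ and all nonempty chains $c_k,c_r$ over $[m]$: (A1) $\varphi\to_{(m)}(\psi\to_{(m)}\varphi)$; (A2) $(\varphi\to_{(m)}(\psi\to_{(m)}\chi))\to_{(m)}((\varphi\to_{(m)}\psi)\to_{(m)}(\varphi\to_{(m)}\chi))$; (A3) $(\neg_{(m)}\psi\to_{(m)}\neg_{(m)}\varphi)\to_{(m)}((\neg_{(m)}\psi\to_{(m)}\varphi)\to_{(m)}\psi)$; (A4) $\varphi\to_{(m)}(\perp_{c_k}\to_{(m)}\neg_{c_k}\varphi)$; (A5) $\neg_{c_k}\neg_{c_r}\varphi\leftrightarrow_{(m)}\neg_{c_k\otimes c_r}\varphi$; (A6) $\neg_{c_k}\perp_{c_r}\leftrightarrow_{(m)}\perp_{c_k\otimes c_r}$; (A7) $\perp_{c_k}\to_{(m)}\perp_{c_r}$, whenever $c_r$ is a subchain of $c_k$. The only rule is modus ponens for $\to_{(m)}$; $\vdash_{(m)}\varphi$ means $\varphi$ has a derivation from these axioms by modus ponens. *)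

From mathcomp Require Import all_boot.
Set Implicit Arguments. Unset Strict Implicit. Unset Printing Implicit Defensive.

(* Chains over [m] are identified with subsets of [m]; we represent [m] = {1..m}
   by 'I_m = {0..m-1} (symbol i+1 is the ordinal i). *)
Definition chain (m : nat) := {set 'I_m}.

Definition cocat m (c d : chain m) : chain m := (c :\: d) :|: (d :\: c).

(* Formulas of CPN_m.  Bot c is the constant bottom_c; Bot set0 is top_(m)
   (convention bottom_eps := top_(m)) and Bot setT is bottom_(m).
   Neg c is only available for nonempty chains c. *)
Inductive form (m : nat) : Type :=
| Var of nat
| Bot of chain m
| Neg (c : chain m) of c != set0 & form m
| Imp of form m & form m.

Arguments Var {m}.

Definition negc m (c : chain m) (phi : form m) : form m :=
  match (c != set0) as b return (c != set0) = b -> form m with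
  | true => fun h => Neg h phi
  | false => fun _ => phi
  end erefl.

Lemma setT_neq0 k : [set: 'I_k.+1] != set0.
Proof. by apply/set0Pn; exists ord0; rewrite inE. Qed.

Definition negF k (phi : form k.+1) : form k.+1 := Neg (setT_neq0 k) phi.
Definition andF k (phi psi : form k.+1) : form k.+1 :=
  negF (Imp phi (negF psi)).
Definition iffF k (phi psi : form k.+1) : form k.+1 :=
  andF (Imp phi psi) (Imp psi phi).

Inductive prov (k : nat) : form k.+1 -> Prop :=
| A1 phi psi : prov (Imp phi (Imp psi phi))
| A2 phi psi chi :
    prov (Imp (Imp phi (Imp psi chi)) (Imp (Imp phi psi) (Imp phi chi)))
| A3 phi psi :
    prov (Imp (Imp (negF psi) (negF phi)) (Imp (Imp (negF psi) phi) psi))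
| A4 phi (ck : chain k.+1) (hk : ck != set0) :
    prov (Imp phi (Imp (Bot ck) (Neg hk phi)))
| A5 phi (ck cr : chain k.+1) (hk : ck != set0) (hr : cr != set0) :
    prov (iffF (Neg hk (Neg hr phi)) (negc (cocat ck cr) phi))
| A6 (ck cr : chain k.+1) (hk : ck != set0) (hr : cr != set0) :
    prov (iffF (Neg hk (Bot cr)) (Bot (cocat ck cr)))
| A7 (ck cr : chain k.+1) (hk : ck != set0) (hr : cr != set0) :
    cr \subset ck -> prov (Imp (Bot ck) (Bot cr))
| MP phi psi : prov (Imp phi psi) -> prov phi -> prov psi.

Definition liftc n (c : chain n) : chain n.+1 := [set widen_ord (leqnSn n) i | i in c].

Lemma liftc_neq0 n (c : chain n) : c != set0 -> liftc c != set0.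
Proof. by rewrite /liftc imset_eq0. Qed.

(* Reading a CPN_n formula as a CPN_(n+1) formula: chains are lifted
   (so bottom_(n) becomes bottom_{1..n}, neg_(n) becomes neg_{1..n},
   top_(n) = Bot set0 becomes Bot set0 = top_(n+1)), and ->_(n) becomes ->_(n+1). *)
Fixpoint embed n (phi : form n) : form n.+1 :=
  match phi with
  | Var p => Var p
  | Bot c => Bot (liftc c)
  | Neg c h psi => Neg (liftc_neq0 h) (embed psi)
  | Imp a b => Imp (embed a) (embed b)
  end.
Arguments prov k _ : clear implicits.

From mathcomp Require Import all_boot.
Set Implicit Arguments. Unset Strict Implicit. Unset Printing Implicit Defensive.

(* Forgetting the last symbol, i.e. restricting every chain over [n+1] to [n]
   and dropping the negations whose chain becomes empty, sends CPN_(n+1)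
   derivations to CPN_n derivations: each axiom instance goes either to an
   instance of the same axiom or, when a restricted chain becomes empty, to a
   CPN_n theorem ([phi -> top -> phi], [phi <-> phi], [bot_c -> top] or
   [neg_c top <-> bot_c]).  Since this restriction undoes [embed], the theorem
   follows. *)

Lemma Neg_irrelevance m (c : chain m) (h h' : c != set0) (p : form m) :
  Neg h p = Neg h' p.
Proof. by rewrite (eq_irrelevance h h'). Qed.

Lemma negc_Neg m (c : chain m) (h : c != set0) (p : form m) : negc c p = Neg h p.
Proof.
by rewrite /negc; move: erefl; rewrite {2 3}h => e; apply: Neg_irrelevance.
Qed.

Lemma negc0 m (p : form m) : negc set0 p = p.
Proof. by rewrite /negc; move: erefl; rewrite {2 3}eqxx. Qed.

Lemma cocat0s m (c : chain m) : cocat set0 c = c.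
Proof. by apply/setP=> i; rewrite !inE; case: (i \in c). Qed.

Lemma cocats0 m (c : chain m) : cocat c set0 = c.
Proof. by apply/setP=> i; rewrite !inE; case: (i \in c). Qed.

Lemma cocatTT m : cocat [set: 'I_m] setT = set0.
Proof. by apply/setP=> i; rewrite !inE. Qed.

Lemma cocatTK m : involutive (@cocat m setT).
Proof. by move=> c; apply/setP=> i; rewrite !inE; case: (i \in c). Qed.

Section Derivations.

Variable k : nat.
Implicit Types (G : form k.+1 -> Prop) (a b c : form k.+1).

Inductive der G : form k.+1 -> Prop :=
| der_hyp a : G a -> der G a
| der_prov a : prov k a -> der G a
| der_MP a b : der G (Imp a b) -> der G a -> der G b.

Definition addhyp a G : form k.+1 -> Prop := fun b => b = a \/ G b.

Lemma prov_der0 a : der (fun=> False) a -> prov k a.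
Proof. by elim=> [_ []|//|b c _ Hbc _ Hb]; apply: MP Hbc Hb. Qed.

Lemma der_addhyp G a b : der G b -> der (addhyp a G) b.
Proof.
elim=> [c Gc|c Pc|c d _ H1 _ H2].
- exact: der_hyp (or_intror Gc).
- exact: der_prov.
- exact: der_MP H1 H2.
Qed.

Lemma der_addhyp_self G a : der (addhyp a G) a.
Proof. exact: der_hyp (or_introl erefl). Qed.

Lemma prov_imp_refl a : prov k (Imp a a).
Proof. exact: MP (MP (A2 a (Imp a a) a) (A1 a (Imp a a))) (A1 a a). Qed.

Lemma der_weaken G a b : der G b -> der G (Imp a b).
Proof. exact: der_MP (der_prov _ (A1 _ _)). Qed.

Lemma deduction G a b : der (addhyp a G) b -> der G (Imp a b).
Proof.
elim=> [c [->|Gc]|c Pc|c d _ IHcd _ IHc].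
- exact/der_prov/prov_imp_refl.
- exact/der_weaken/der_hyp.
- exact/der_weaken/der_prov.
- exact: der_MP (der_MP (der_prov _ (A2 _ _ _)) IHcd) IHc.
Qed.

Lemma der_contra G a b :
  der G (Imp (negF b) (negF a)) -> der G (Imp (negF b) a) -> der G b.
Proof. by move=> H1 H2; apply: der_MP (der_MP (der_prov _ (A3 a b)) H1) H2. Qed.

Lemma der_negFK G a : der G (negF (negF a)) -> der G a.
Proof.
move=> H; apply: (@der_contra _ (negF a)); first exact: der_weaken.
exact/der_prov/prov_imp_refl.
Qed.

Lemma der_absurd G a b : der G (negF a) -> der G a -> der G b.
Proof. by move=> Hna Ha; apply: (@der_contra _ a); apply: der_weaken. Qed.

Lemma der_imp_negF G a : der G (Imp a (negF a)) -> der G (negF a).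
Proof.
move=> H; apply: (@der_contra _ a); apply: deduction.
- exact: der_MP (der_addhyp _ H) (der_negFK (der_addhyp_self _ _)).
- exact/der_negFK/der_addhyp_self.
Qed.

Lemma der_andF G a b : der G a -> der G b -> der G (andF a b).
Proof.
move=> Ha Hb; apply: (@der_contra _ b); last exact: der_weaken.
apply: deduction; exact: der_MP (der_negFK (der_addhyp_self _ _)) (der_addhyp _ Ha).
Qed.

Lemma der_andFl G a b : der G (andF a b) -> der G a.
Proof.
move=> H; apply: (@der_contra _ (Imp a (negF b))); first exact: der_weaken.
do 2!apply: deduction; exact: der_absurd (der_addhyp _ (der_addhyp_self _ _))
                                          (der_addhyp_self _ _).
Qed.

Lemma der_andFr G a b : der G (andF a b) -> der G b.
Proof.
move=> H; apply: (@der_contra _ (Imp a (negF b))); first exact: der_weaken.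
exact: der_prov (A1 _ _).
Qed.

Lemma der_iffF G a b : der G (Imp a b) -> der G (Imp b a) -> der G (iffF a b).
Proof. exact: der_andF. Qed.

Lemma der_iffFl G a b : der G (iffF a b) -> der G (Imp a b).
Proof. exact: der_andFl. Qed.

Lemma der_iffFr G a b : der G (iffF a b) -> der G (Imp b a).
Proof. exact: der_andFr. Qed.

Lemma prov_iffF_refl a : prov k (iffF a a).
Proof. by apply/prov_der0/der_iffF; apply/der_prov/prov_imp_refl. Qed.

(* [bot_(k+1) -> neg bot_(k+1)] is an instance of A4, and A6 with the full
   chain twice rewrites [neg bot_(k+1)] to [bot_eps = top]. *)
Lemma prov_top : prov k (Bot set0).
Proof.
have A6T := A6 (setT_neq0 k) (setT_neq0 k); rewrite cocatTT in A6T.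
apply/prov_der0/(der_MP (der_iffFl (der_prov _ A6T)))/der_imp_negF/deduction.
have bot_T := der_addhyp_self (fun=> False) (Bot [set: 'I_k.+1]).
exact: der_MP (der_MP (der_prov _ (A4 _ _)) bot_T) bot_T.
Qed.

Lemma prov_bot_Neg_top (c : chain k.+1) (h : c != set0) :
  prov k (Imp (Bot c) (Neg h (Bot set0))).
Proof. exact: MP (A4 _ h) prov_top. Qed.

(* For [c] proper, with complement [c'], A5 turns [neg_c top] into
   [neg (neg_c' top)], while A6 and A4 give [neg bot_c -> bot_c' -> neg_c' top];
   contraposition (A3) yields [bot_c]. *)
Lemma prov_Neg_top_bot (c : chain k.+1) (h : c != set0) :
  prov k (Imp (Neg h (Bot set0)) (Bot c)).
Proof.
apply/prov_der0/deduction.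
have [cT|cT] := eqVneq c setT.
  move: h; rewrite cT => h; apply: der_absurd (der_prov _ prov_top).
  by rewrite (Neg_irrelevance h (setT_neq0 k)); apply: der_addhyp_self.
have hc' : cocat setT c != set0.
  by apply: contra_neq cT => e; rewrite -(cocatTK c) e cocats0.
have A5c := A5 (Bot set0) (setT_neq0 k) hc'.
rewrite cocatTK (negc_Neg h) in A5c.
apply: (@der_contra _ (Neg hc' (Bot set0))).
  exact/der_weaken/(der_MP (der_iffFr (der_prov _ A5c)))/der_addhyp_self.
apply: der_prov; apply/prov_der0/deduction.
apply: der_MP (der_prov _ (prov_bot_Neg_top hc')) _.
exact: der_MP (der_iffFl (der_prov _ (A6 (setT_neq0 k) h))) (der_addhyp_self _ _).
Qed.

Lemma prov_Neg_top (c : chain k.+1) (h : c != set0) :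
  prov k (iffF (Neg h (Bot set0)) (Bot c)).
Proof.
apply/prov_der0/der_iffF; apply: der_prov.
  exact: prov_Neg_top_bot.
exact: prov_bot_Neg_top.
Qed.

End Derivations.

Definition restrc n (c : chain n.+1) : chain n :=
  [set i | widen_ord (leqnSn n) i \in c].

Lemma restrc_liftc n (c : chain n) : restrc (liftc c) = c.
Proof.
apply/setP=> i; rewrite inE mem_imset // => x y /(congr1 val) xy.
exact: val_inj.
Qed.

Lemma restrc0 n : restrc (set0 : chain n.+1) = set0.
Proof. by apply/setP=> i; rewrite !inE. Qed.

Lemma restrcT n : restrc [set: 'I_n.+1] = setT.
Proof. by apply/setP=> i; rewrite !inE. Qed.

Lemma restrc_cocat n (c d : chain n.+1) :
  restrc (cocat c d) = cocat (restrc c) (restrc d).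
Proof. by apply/setP=> i; rewrite !inE. Qed.

Lemma restrcS n (c d : chain n.+1) : c \subset d -> restrc c \subset restrc d.
Proof. by move=> cd; apply/subsetP=> i; rewrite !inE; apply: (subsetP cd). Qed.

Fixpoint restrf n (phi : form n.+1) : form n :=
  match phi with
  | Var p => Var p
  | Bot c => Bot (restrc c)
  | Neg c _ psi => negc (restrc c) (restrf psi)
  | Imp a b => Imp (restrf a) (restrf b)
  end.

Lemma restrf_embed n (phi : form n) : restrf (embed phi) = phi.
Proof.
elim: phi => [p|c|c h p IHp|a IHa b IHb] /=.
- by [].
- by rewrite restrc_liftc.
- by rewrite restrc_liftc IHp (negc_Neg h).
- by rewrite IHa IHb.
Qed.

Lemma restrf_negc n (c : chain n.+1) (phi : form n.+1) :
  restrf (negc c phi) = negc (restrc c) (restrf phi).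
Proof.
have [->|h] := eqVneq c set0; first by rewrite restrc0 !negc0.
by rewrite (negc_Neg h).
Qed.

Lemma restrf_Imp n (a b : form n.+1) : restrf (Imp a b) = Imp (restrf a) (restrf b).
Proof. by []. Qed.

Lemma restrf_negF n (phi : form n.+2) : restrf (negF phi) = negF (restrf phi).
Proof. by rewrite /= restrcT (negc_Neg (setT_neq0 n)). Qed.

Lemma restrf_iffF n (a b : form n.+2) :
  restrf (iffF a b) = iffF (restrf a) (restrf b).
Proof. by rewrite /iffF /andF !(restrf_negF, restrf_Imp). Qed.

Lemma prov_restrf n (phi : form n.+2) : prov n.+1 phi -> prov n (restrf phi).
Proof.
elim=> {phi}.
- by move=> phi psi; apply: A1.
- by move=> phi psi chi; apply: A2.
- by move=> phi psi; rewrite !(restrf_Imp, restrf_negF); apply: A3.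
- move=> phi ck ? /=; have [->|hk] := eqVneq (restrc ck) set0.
    by rewrite negc0; apply: A1.
  by rewrite (negc_Neg hk); apply: A4.
- move=> phi ck cr ? ?; rewrite restrf_iffF /= restrf_negc restrc_cocat.
  have [->|hk] := eqVneq (restrc ck) set0.
    by rewrite negc0 cocat0s; apply: prov_iffF_refl.
  have [->|hr] := eqVneq (restrc cr) set0.
    by rewrite negc0 cocats0; apply: prov_iffF_refl.
  by rewrite (negc_Neg hk) (negc_Neg hr); apply: A5.
- move=> ck cr ? ?; rewrite restrf_iffF /= restrc_cocat.
  have [->|hk] := eqVneq (restrc ck) set0.
    by rewrite negc0 cocat0s; apply: prov_iffF_refl.
  have [->|hr] := eqVneq (restrc cr) set0.
    by rewrite (negc_Neg hk) cocats0; apply: prov_Neg_top.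
  by rewrite (negc_Neg hk); apply: A6.
- move=> ck cr _ _ crck /=; have [->|hr] := eqVneq (restrc cr) set0.
    exact: MP (A1 _ _) (prov_top n).
  have hk : restrc ck != set0.
    by apply: contra_neq hr => ck0; apply/eqP; rewrite -subset0 -ck0 restrcS.
  exact: A7 hk hr (restrcS crck).
- by move=> phi psi _ IH1 _ IH2; apply: MP IH1 IH2.
Qed.

Theorem mainTheorem16 (n : nat) (phi : form n.+1) :
  prov n.+1 (embed phi) -> prov n phi.
Proof. by move=> H; rewrite -(restrf_embed phi); apply: prov_restrf. Qed.
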